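(* Let $G=(V,E)$ be a simple, connected graph with maximum degree $\Delta$, and let $V = A \cup B \cup C$ be a partition into pairwise disjoint sets ($C$ possibly empty) satisfying: (1) every $v \in A$ satisfies $d_B(v) \geq d_A(v) + \max\{1, d_C(v)\}$; (2) every $v \in B$ satisfies $d_A(v) \geq d_B(v) + \max\{1, d_C(v)\}$; (3) $d_C(v) = 0$ for all $v \in C$; (4) every $v \in C$ satisfies $d_A(v) = d_B(v)$; (5) $\# E(A \cup B, C) + 2\# E(A,A) + 2\# E(B,B) \leq 2\# E(A,B)$. Then $$\# E(A \cup C, B) \geq \left(\frac{1}{2} + \frac{1}{3\Delta}\right)\textsc{MaxCut}(G).$$
   Context: For a vertex $v$ and a set $S \subseteq V$, $d_S(v)$ denotes the number of neighbors of $v$ in $S$. For disjoint $X,Y \subseteq V$, $\# E(X,Y)$ is the number of edges with one endpoint in $X$ and the other in $Y$; $\# E(X,X)$ is the number of edges with both endpoints in $X$. $\textsc{MaxCut}(G) = \max \# E(X,Y)$ over all partitions $V = X \cup Y$ into disjoint sets. *)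

From mathcomp Require Import all_boot all_order all_algebra.
Set Implicit Arguments. Unset Strict Implicit. Unset Printing Implicit Defensive.

Definition simple_graph (T : finType) (e : rel T) : Prop :=
  symmetric e /\ irreflexive e.

Definition connected_graph (T : finType) (e : rel T) : Prop :=
  forall x y : T, connect e x y.

Definition deg_in (T : finType) (e : rel T) (S : {set T}) (v : T) : nat :=
  #|[set u in S | e v u]|.

Definition max_deg (T : finType) (e : rel T) : nat :=
  \max_(v : T) #|[set u | e v u]|.

(* #E(X,Y): number of (unordered) edges {x,y} with x in X and y in Y.
   For X = Y this is the number of edges with both ends in X. *)
Definition nE (T : finType) (e : rel T) (X Y : {set T}) : nat :=
  #|[set S : {set T} | [exists x, exists y,
       [&& S == [set x; y], e x y, x \in X & y \in Y]]]|.

Definition maxcut (T : finType) (e : rel T) : nat :=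
  \max_(X : {set T}) nE e X (~: X).

(* Weighting the vertex inequalities (1) and (2) with deg v <= Δ and summing them over
   A and B gives (3Δ + 2)|E| <= 6Δ #E(A ∪ C, B); conditions (3) and (4) make C an
   independent set with #E(A, C) = #E(B, C), which is what lets the C-edges be
   absorbed.  As MaxCut(G) <= |E|, the bound follows. *)

From mathcomp Require Import all_boot all_order all_algebra zify ring.
Import Order.TTheory GRing.Theory Num.Theory.

Set Implicit Arguments. Unset Strict Implicit. Unset Printing Implicit Defensive.

Lemma card_set_condE (I : finType) (X : {set I}) (P : pred I) :
  #|[set x in X | P x]| = \sum_(x in X) P x.
Proof. by rewrite -sum1dep_card big_mkcondr. Qed.

Section BigSets.
Variable T : finType.

Lemma disjointsU (X Y Z : {set T}) :
  [disjoint X :|: Y & Z] = [disjoint X & Z] && [disjoint Y & Z].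
Proof. by rewrite !disjoints_subset subUset. Qed.

Lemma sum_setU (X Y : {set T}) (f : T -> nat) : [disjoint X & Y] ->
  \sum_(v in X :|: Y) f v = \sum_(v in X) f v + \sum_(v in Y) f v.
Proof. by move=> dXY; rewrite -bigU //; apply: eq_bigl => v; rewrite !inE. Qed.

Lemma sum_card_setI (F : {set {set T}}) (W : {set T}) :
  \sum_(S in F) #|S :&: W| = \sum_(v in W) #|[set S in F | v \in S]|.
Proof.
have cardIE S : #|S :&: W| = \sum_(v in W) (v \in S : nat).
  by rewrite -card_set_condE; apply: eq_card => v; rewrite !inE andbC.
under eq_bigr do rewrite cardIE.
by rewrite exchange_big; apply: eq_bigr => v _; rewrite card_set_condE.
Qed.

End BigSets.

(* With t := b - a >= maxn 1 c and D >= 2a + t + c: 3Dt >= 2D + (t + c) t >= 2(a + b + c) + 2c. *)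
Lemma local_gain (D a b c : nat) : a + b + c <= D -> a + maxn 1 c <= b ->
  2 * (a + b + c) + 2 * c + 3 * D * a <= 3 * D * b.
Proof. nia. Qed.

Section Degrees.
Variables (T : finType) (e : rel T).

Lemma deg_inE (X : {set T}) v : deg_in e X v = \sum_(u in X) e v u.
Proof. exact: card_set_condE. Qed.

Lemma deg_inU (X Y : {set T}) v : [disjoint X & Y] ->
  deg_in e (X :|: Y) v = deg_in e X v + deg_in e Y v.
Proof. by move=> dXY; rewrite !deg_inE sum_setU. Qed.

Lemma deg_in_le_max_deg (X : {set T}) v : deg_in e X v <= max_deg e.
Proof.
apply: leq_trans (leq_bigmax v); apply: subset_leq_card.
by apply/subsetP => u; rewrite !inE => /andP[].
Qed.

Lemma nE_mono (X Y X' Y' : {set T}) :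
  X \subset X' -> Y \subset Y' -> nE e X Y <= nE e X' Y'.
Proof.
move=> sXX' sYY'; apply/subset_leq_card/subsetP => S; rewrite !inE.
case/existsP=> x /existsP[y /and4P[/eqP-> exy xX yY]].
apply/existsP; exists x; apply/existsP; exists y.
by rewrite eqxx exy (subsetP sXX') ?(subsetP sYY').
Qed.

Lemma maxcut_le_nE : maxcut e <= nE e setT setT.
Proof. by apply/bigmax_leqP => X _; apply: nE_mono; apply: subsetT. Qed.

Definition deg_sum (X Y : {set T}) : nat := \sum_(v in X) deg_in e Y v.

Lemma deg_sum_gain (D : nat) (X Y Z : {set T}) :
  (forall v, v \in X -> deg_in e X v + deg_in e Y v + deg_in e Z v <= D) ->
  (forall v, v \in X -> deg_in e X v + maxn 1 (deg_in e Z v) <= deg_in e Y v) ->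
  2 * (deg_sum X X + deg_sum X Y + deg_sum X Z) + 2 * deg_sum X Z + 3 * D * deg_sum X X
    <= 3 * D * deg_sum X Y.
Proof.
move=> le_D gain; rewrite /deg_sum -!big_split /= !big_distrr -!big_split /=.
by apply: leq_sum => v vX; apply: local_gain; [apply: le_D | apply: gain].
Qed.

Hypotheses (e_sym : symmetric e) (e_irr : irreflexive e).

Lemma deg_sumC (X Y : {set T}) : deg_sum X Y = deg_sum Y X.
Proof.
rewrite /deg_sum; under eq_bigr do rewrite deg_inE.
rewrite exchange_big; apply: eq_bigr => u _; rewrite deg_inE.
by apply: eq_bigr => v _; rewrite e_sym.
Qed.

Definition edges (X Y : {set T}) : {set {set T}} :=
  [set S : {set T} | [exists x, exists y, [&& S == [set x; y], e x y, x \in X & y \in Y]]].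

Lemma nE_edges (X Y : {set T}) : nE e X Y = #|edges X Y|.
Proof. by []. Qed.

Lemma card_edges_at (X Y : {set T}) v :
  #|[set S in edges X Y | v \in S]| =
  #|[set u | e v u && ((v \in X) && (u \in Y) || (u \in X) && (v \in Y))]|.
Proof.
set N := [set u | e v u && _].
have -> : [set S in edges X Y | v \in S] = [set [set v; u] | u in N].
  apply/setP => S; rewrite !inE; apply/andP/imsetP.
  - case=> /existsP[x /existsP[y /and4P[/eqP -> exy xX yY]]].
    rewrite !inE => /orP[] /eqP Ev; subst v.
      by exists y; rewrite // inE exy xX yY.
    by exists x; rewrite 1?setUC // inE e_sym exy xX yY orbT.
  - case=> u; rewrite inE => /andP[evu XY] ->; split; last by rewrite !inE eqxx.
    apply/existsP; case/orP: XY => /andP[H1 H2].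
      by exists v; apply/existsP; exists u; rewrite eqxx evu H1 H2.
    by exists u; apply/existsP; exists v; rewrite setUC eqxx e_sym evu H1 H2.
apply: card_in_imset => u w; rewrite !inE => /andP[evu _] _ Euw.
have : u \in [set v; w] by rewrite -Euw !inE eqxx orbT.
by rewrite !inE => /orP[/eqP Euv | /eqP //]; move: evu; rewrite Euv e_irr.
Qed.

Lemma nE_disjoint (X Y : {set T}) : [disjoint X & Y] -> nE e X Y = deg_sum Y X.
Proof.
move=> dXY; rewrite nE_edges -sum1_card.
have <- : \sum_(S in edges X Y) #|S :&: Y| = \sum_(S in edges X Y) 1.
  apply: eq_bigr => S; rewrite inE => /existsP[x /existsP[y /and4P[/eqP -> _ xX yY]]].
  rewrite -(cards1 y); apply: eq_card => z; rewrite !inE andb_orl.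
  case: (eqVneq z y) => [->|_]; first by rewrite yY !andbT orbT.
  by case: eqP => // ->; rewrite (disjointFr dXY xX).
rewrite sum_card_setI /deg_sum; apply: eq_bigr => v vY; rewrite card_edges_at /deg_in.
by apply: eq_card => u; rewrite !inE vY (disjointFl dXY vY) andbT andbC.
Qed.

Lemma nE_self (X : {set T}) : 2 * nE e X X = deg_sum X X.
Proof.
rewrite nE_edges mulnC -sum_nat_const.
have <- : \sum_(S in edges X X) #|S :&: X| = \sum_(S in edges X X) 2.
  apply: eq_bigr => S; rewrite inE => /existsP[x /existsP[y /and4P[/eqP -> exy xX yX]]].
  rewrite (setIidPl _); last by apply/subsetP => z; rewrite !inE => /orP[] /eqP ->.
  by rewrite cards2; case: eqP exy => // ->; rewrite e_irr.
rewrite sum_card_setI /deg_sum; apply: eq_bigr => v vX; rewrite card_edges_at /deg_in.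
by apply: eq_card => u; rewrite !inE vX andbT orbb andbC.
Qed.

End Degrees.

Lemma le_half_plus_inv3 (R : realFieldType) (D M c : nat) :
  (3 * D + 2) * M <= 6 * D * c ->
  ((1 / 2 + 1 / (3 * D%:R)) * M%:R <= c%:R :> R)%R.
Proof.
move=> le_cut; have [D0|D_gt0] := posnP D.
  have -> : M = 0 by move: le_cut; rewrite D0; lia.
  by rewrite mulr0 ler0n.
have -> : ((1 / 2 + 1 / (3 * D%:R)) * M%:R = ((3 * D + 2) * M)%:R / (6 * D)%:R :> R)%R.
  have D_neq0 : (D%:R != 0 :> R)%R by rewrite pnatr_eq0 -lt0n.
  by rewrite !natrM natrD; field; rewrite D_neq0.
rewrite ler_pdivrMr; last by rewrite ltr0n muln_gt0 D_gt0.
by rewrite -natrM ler_nat [c * _]mulnC.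
Qed.

Section Partition.
Variables (T : finType) (e : rel T) (A B C : {set T}).
Hypotheses (e_sym : symmetric e) (e_irr : irreflexive e).
Hypotheses (dAB : [disjoint A & B]) (dAC : [disjoint A & C]) (dBC : [disjoint B & C]).
Hypothesis ABC : A :|: B :|: C = [set: T].
Hypothesis gainA :
  forall v, v \in A -> deg_in e A v + maxn 1 (deg_in e C v) <= deg_in e B v.
Hypothesis gainB :
  forall v, v \in B -> deg_in e B v + maxn 1 (deg_in e C v) <= deg_in e A v.
Hypothesis C_indep : forall v, v \in C -> deg_in e C v = 0.
Hypothesis C_balanced : forall v, v \in C -> deg_in e A v = deg_in e B v.

Lemma sum_partition (f : T -> nat) :
  \sum_(v in [set: T]) f v = \sum_(v in A) f v + \sum_(v in B) f v + \sum_(v in C) f v.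
Proof.
have dABC : [disjoint A :|: B & C] by rewrite disjointsU dAC dBC.
by rewrite -ABC !sum_setU.
Qed.

Lemma deg_in_partition v :
  deg_in e [set: T] v = deg_in e A v + deg_in e B v + deg_in e C v.
Proof. by rewrite !deg_inE sum_partition. Qed.

Lemma deg_sum_partitionl (Y : {set T}) :
  deg_sum e [set: T] Y = deg_sum e A Y + deg_sum e B Y + deg_sum e C Y.
Proof. exact: sum_partition. Qed.

Lemma deg_sum_partitionr (X : {set T}) :
  deg_sum e X [set: T] = deg_sum e X A + deg_sum e X B + deg_sum e X C.
Proof.
by rewrite /deg_sum -!big_split; apply: eq_bigr => v _; rewrite deg_in_partition.
Qed.

Lemma nE_cut_ge :
  (3 * max_deg e + 2) * nE e setT setT <= 6 * max_deg e * nE e (A :|: C) B.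
Proof.
set D := max_deg e.
have le_D v : deg_in e A v + deg_in e B v + deg_in e C v <= D.
  by rewrite -deg_in_partition; apply: deg_in_le_max_deg.
have le_D' v : v \in B -> deg_in e B v + deg_in e A v + deg_in e C v <= D.
  by rewrite [_ + deg_in e A v]addnC => _; apply: le_D.
have gA := deg_sum_gain (fun v _ => le_D v) gainA.
have gB := deg_sum_gain le_D' gainB.
have edges2 := nE_self e_sym e_irr [set: T].
have cutE : nE e (A :|: C) B = deg_sum e B A + deg_sum e B C.
  rewrite (nE_disjoint e_sym e_irr); last by rewrite disjointsU dAB disjoint_sym dBC.
  by rewrite /deg_sum -big_split; apply: eq_bigr => v _; rewrite deg_inU.
have CC : deg_sum e C C = 0 by apply: big1 => v /C_indep.
have CA : deg_sum e C A = deg_sum e C B by apply: eq_bigr => v /C_balanced.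
rewrite deg_sum_partitionl !deg_sum_partitionr in edges2.
move: edges2 cutE gA gB.
rewrite CC -CA (deg_sumC e_sym A B) (deg_sumC e_sym A C) (deg_sumC e_sym B C) -CA.
nia.
Qed.

End Partition.

Theorem corollary4 (T : finType) (e : rel T) (A B C : {set T}) :
  simple_graph e -> connected_graph e ->
  [disjoint A & B] -> [disjoint A & C] -> [disjoint B & C] ->
  A :|: B :|: C = [set: T] ->
  (forall v, v \in A -> deg_in e B v >= deg_in e A v + maxn 1 (deg_in e C v))%N ->
  (forall v, v \in B -> deg_in e A v >= deg_in e B v + maxn 1 (deg_in e C v))%N ->
  (forall v, v \in C -> deg_in e C v = 0%N) ->
  (forall v, v \in C -> deg_in e A v = deg_in e B v) ->
  (nE e (A :|: B) C + 2 * nE e A A + 2 * nE e B B <= 2 * nE e A B)%N ->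
  (((nE e (A :|: C) B)%:R : rat) >=
    (1 / 2 + 1 / (3 * (max_deg e)%:R)) * (maxcut e)%:R)%R.
Proof.
move=> [e_sym e_irr] _ dAB dAC dBC ABC gainA gainB C_indep C_balanced _.
apply: le_half_plus_inv3; apply: leq_trans (nE_cut_ge e_sym e_irr dAB dAC dBC ABC
  gainA gainB C_indep C_balanced).
by rewrite leq_mul2l maxcut_le_nE orbT.
Qed.
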